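(* Let $y,z$ be nonzero complex numbers and let $u_n=u_n(y,z)$, $v_n=v_n(y,z)$ be the Lucas sequences of the first and second kind. Let $x,r\in\mathbb{C}$ and let $c,n$ be integers with $n\ge c$; if $c<0$ assume moreover $x\neq 0$. Then \[ \sum_{k=c}^n r^{n-k}x^k\big(r v_k(y,z)+(xy-2r)u_{k+1}(y,z)\big)=x^{n+1}y\,u_{n+1}(y,z)-r^{n-c+1}x^c y\,u_c(y,z) \] and \[ \sum_{k=c}^n r^{n-k}x^k\big((y^2-4z)r\,u_k(y,z)+(xy-2r)v_{k+1}(y,z)\big)=x^{n+1}y\,v_{n+1}(y,z)-r^{n-c+1}x^c y\,v_c(y,z). \]
   Context: For nonzero complex numbers $y,z$, the Lucas sequences $u_n(y,z)$ and $v_n(y,z)$ are defined by $u_0=0$, $u_1=1$, $v_0=2$, $v_1=y$ and $w_n=y\,w_{n-1}-z\,w_{n-2}$ for $n\ge 2$ (for $w=u$ and $w=v$), and extended to negative indices by $u_{-n}(y,z)=-u_n(y,z)/z^n$ and $v_{-n}(y,z)=v_n(y,z)/z^n$. *)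

From HB Require Import structures.
From mathcomp Require Import all_boot all_order all_algebra.
From mathcomp Require Import reals.
From mathcomp.real_closed Require Import complex.
Set Implicit Arguments. Unset Strict Implicit. Unset Printing Implicit Defensive.
Import Order.TTheory GRing.Theory Num.Theory.
Local Open Scope ring_scope.

Fixpoint lucas_pair {F : fieldType} (y z a b : F) (n : nat) : F * F :=
  match n with
  | 0 => (a, b)
  | m.+1 => let p := lucas_pair y z a b m in (p.2, y * p.2 - z * p.1)
  end.
(* lucas_rec y z a b n = w_n, where w_0 = a, w_1 = b, w_n = y w_{n-1} - z w_{n-2} *)
Definition lucas_rec {F : fieldType} (y z a b : F) (n : nat) : F :=
  (lucas_pair y z a b n).1.

Definition lucas_u_nat {F : fieldType} (y z : F) (n : nat) : F := lucas_rec y z 0 1 n.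
Definition lucas_v_nat {F : fieldType} (y z : F) (n : nat) : F := lucas_rec y z 2 y n.

(* Extension to integer indices:
   u_{-n} = - u_n / z^n,  v_{-n} = v_n / z^n. *)
Definition lucas_u {F : fieldType} (y z : F) (n : int) : F :=
  match n with
  | Posz m => lucas_u_nat y z m
  | Negz m => - lucas_u_nat y z m.+1 / z ^+ m.+1
  end.
Definition lucas_v {F : fieldType} (y z : F) (n : int) : F :=
  match n with
  | Posz m => lucas_v_nat y z m
  | Negz m => lucas_v_nat y z m.+1 / z ^+ m.+1
  end.

From HB Require Import structures.
From mathcomp Require Import all_boot all_order all_algebra.
From mathcomp Require Import reals.
From mathcomp.real_closed Require Import complex.
From mathcomp Require Import ring zify.
Import Order.TTheory GRing.Theory Num.Theory.
Local Open Scope ring_scope.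

(* Both sums telescope.  For any sequence w, with a_k = r^(n-k+1) x^k y w_k,
   r^(n-k) x^k (r (2 w_(k+1) - y w_k) + (x y - 2 r) w_(k+1)) = a_(k+1) - a_k.
   The two identities are the cases w = u and w = v, thanks to
   v_k = 2 u_(k+1) - y u_k  and  (y^2 - 4z) u_k = 2 v_(k+1) - y v_k,
   which hold for all integers k when z != 0: for k >= 0 because both sides
   satisfy the recurrence and agree at k = 0, 1, and for k < 0 they reduce,
   through u_(-m) = -u_m / z^m and v_(-m) = v_m / z^m, to the case k >= 0. *)

Section LucasNat.

Variables (F : fieldType) (y z : F).

Lemma lucas_rec0 a b : lucas_rec y z a b 0 = a. Proof. by []. Qed.

Lemma lucas_rec1 a b : lucas_rec y z a b 1 = b. Proof. by []. Qed.

Lemma lucas_recSS a b m :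
  lucas_rec y z a b m.+2 = y * lucas_rec y z a b m.+1 - z * lucas_rec y z a b m.
Proof. by []. Qed.

Lemma recurrence_eq0 (w : nat -> F) :
  w 0 = 0 -> w 1 = 0 -> (forall m, w m.+2 = y * w m.+1 - z * w m) ->
  forall m, w m = 0.
Proof.
move=> w0 w1 wSS m; suff [] : w m = 0 /\ w m.+1 = 0 by [].
by elim: m => [|m [wm wm1]] //; rewrite wSS wm wm1 !mulr0 subr0.
Qed.

Lemma lucas_v_nat_u m :
  lucas_v_nat y z m = 2 * lucas_u_nat y z m.+1 - y * lucas_u_nat y z m.
Proof.
apply/eqP; rewrite -subr_eq0; apply/eqP; move: m.
apply: recurrence_eq0 => [||m];
  by rewrite /lucas_u_nat /lucas_v_nat ?lucas_recSS ?lucas_rec0 ?lucas_rec1; ring.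
Qed.

Lemma lucas_u_nat_v m :
  (y ^+ 2 - 4 * z) * lucas_u_nat y z m
  = 2 * lucas_v_nat y z m.+1 - y * lucas_v_nat y z m.
Proof.
apply/eqP; rewrite -subr_eq0; apply/eqP; move: m.
apply: recurrence_eq0 => [||m];
  by rewrite /lucas_u_nat /lucas_v_nat ?lucas_recSS ?lucas_rec0 ?lucas_rec1; ring.
Qed.

End LucasNat.

Section LucasInt.

Variables (F : fieldType) (y z : F).

Lemma lucas_u_oppz (m : nat) : lucas_u y z (- m%:Z) = - lucas_u_nat y z m / z ^+ m.
Proof. by case: m => [|m] //; rewrite !oppr0 mul0r. Qed.

Lemma lucas_v_oppz (m : nat) : lucas_v y z (- m%:Z) = lucas_v_nat y z m / z ^+ m.
Proof. by case: m => [|m] //; rewrite expr0 divr1. Qed.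

Hypothesis z_neq0 : z != 0.

Lemma lucas_v_u k : lucas_v y z k = 2 * lucas_u y z (k + 1) - y * lucas_u y z k.
Proof.
case: k => m.
  by rewrite (_ : m%:Z + 1 = m.+1); [exact: lucas_v_nat_u | lia].
rewrite NegzE (_ : - m.+1%:Z + 1 = - m%:Z); last by lia.
rewrite !lucas_u_oppz lucas_v_oppz lucas_v_nat_u /lucas_u_nat lucas_recSS exprS.
by field; rewrite z_neq0 expf_neq0.
Qed.

Lemma lucas_u_v k :
  (y ^+ 2 - 4 * z) * lucas_u y z k = 2 * lucas_v y z (k + 1) - y * lucas_v y z k.
Proof.
case: k => m.
  by rewrite (_ : m%:Z + 1 = m.+1); [exact: lucas_u_nat_v | lia].
rewrite NegzE (_ : - m.+1%:Z + 1 = - m%:Z); last by lia.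
rewrite lucas_u_oppz !lucas_v_oppz [_ * (_ / _)]mulrA mulrN lucas_u_nat_v.
rewrite /lucas_v_nat lucas_recSS exprS.
by field; rewrite z_neq0 expf_neq0.
Qed.

End LucasInt.

Lemma exprzSr (R : unitRingType) (x : R) (k : int) :
  (0 <= k) || (x \is a GRing.unit) -> x ^ (k + 1) = x ^ k * x.
Proof.
case/orP => [k_ge0 | x_unit]; last by rewrite exprzDr // expr1z.
by rewrite exprzD_ss ?k_ge0 // expr1z.
Qed.

Lemma telescope_sumz (V : zmodType) (a : int -> V) (c n : int) : c <= n ->
  \sum_(i < `|n - c|.+1) (a (c + i%:Z + 1) - a (c + i%:Z)) = a (n + 1) - a c.
Proof.
move=> le_cn; have -> : n + 1 = c + (`|n - c|.+1)%:Z by lia.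
have := telescope_sumr (fun i : nat => a (c + i%:Z)) (leq0n `|n - c|.+1).
rewrite big_mkord addr0 => <-.
by apply: eq_bigr => i _; rewrite -addrA -PoszD addn1.
Qed.

Lemma sum_lucas_telescope {F : fieldType} (w h : int -> F) (x y r : F) (c n : int) :
    c <= n -> (c < 0 -> x != 0) ->
    (forall k, h k = r * (2 * w (k + 1) - y * w k)) ->
  \sum_(i < `|n - c|.+1)
      r ^ (n - (c + i%:Z)) * x ^ (c + i%:Z)
      * (h (c + i%:Z) + (x * y - 2 * r) * w (c + i%:Z + 1))
    = x ^ (n + 1) * y * w (n + 1) - r ^ (n - c + 1) * x ^ c * y * w c.
Proof.
move=> le_cn x_neq0 hE; pose a k := r ^ (n - k + 1) * x ^ k * y * w k.
have summandE k : c <= k <= n ->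
    r ^ (n - k) * x ^ k * (h k + (x * y - 2 * r) * w (k + 1)) = a (k + 1) - a k.
  case/andP => le_ck le_kn.
  have xkS : x ^ (k + 1) = x ^ k * x.
    apply: exprzSr; rewrite unitfE.
    by case: (ltrP c 0) => [/x_neq0 -> | /le_trans/(_ le_ck) ->]; rewrite ?orbT.
  have rkS : r ^ (n - k + 1) = r ^ (n - k) * r by rewrite exprzSr ?subr_ge0 ?le_kn.
  rewrite /a (_ : n - (k + 1) + 1 = n - k); last by rewrite opprD addrA subrK.
  by rewrite xkS rkS hE; ring.
rewrite (eq_bigr (fun i : 'I_ _ => a (c + i%:Z + 1) - a (c + i%:Z))); last first.
  by move=> i _; apply: summandE; have := ltn_ord i; lia.
rewrite telescope_sumz // /a (_ : n - (n + 1) + 1 = 0) ?expr0z ?mul1r //.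
by rewrite opprD addrA subrK subrr.
Qed.

Local Open Scope complex_scope.

Theorem theorem1 (R : realType) (y z x r : R[i]) (c n : int)
    (hy : y != 0) (hz : z != 0) (hcn : c <= n) (hx : c < 0 -> x != 0) :
  \sum_(i < `|n - c|.+1)
      r ^ (n - (c + i%:Z)) * x ^ (c + i%:Z)
      * (r * lucas_v y z (c + i%:Z) + (x * y - 2 * r) * lucas_u y z (c + i%:Z + 1))
    = x ^ (n + 1) * y * lucas_u y z (n + 1) - r ^ (n - c + 1) * x ^ c * y * lucas_u y z c
  /\
  \sum_(i < `|n - c|.+1)
      r ^ (n - (c + i%:Z)) * x ^ (c + i%:Z)
      * ((y ^+ 2 - 4 * z) * r * lucas_u y z (c + i%:Z)
         + (x * y - 2 * r) * lucas_v y z (c + i%:Z + 1))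
    = x ^ (n + 1) * y * lucas_v y z (n + 1) - r ^ (n - c + 1) * x ^ c * y * lucas_v y z c.
Proof.
split.
  apply: (sum_lucas_telescope (lucas_u y z) (fun k => r * lucas_v y z k)
    x y r c n) => // k.
  by rewrite lucas_v_u.
apply: (sum_lucas_telescope (lucas_v y z) (fun k => (y ^+ 2 - 4 * z) * r * lucas_u y z k)
  x y r c n) => // k.
by rewrite [RHS]mulrC -lucas_u_v // mulrAC.
Qed.
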